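(* Let $p\ge3$ be a prime which is not a Wieferich prime. Then $P(p^k,n)=p^{k-1}P(p,n)$ for all positive integers $k$ and $n$.
   Context: For positive integers $m,n$, let $\mathbf{Z}_m$ be the integers modulo $m$ and $T:\mathbf{Z}_m^n\to\mathbf{Z}_m^n$, $T(a_0,\dots,a_{n-1})=(a_0+a_1,a_1+a_2,\dots,a_{n-1}+a_0)$. For $\mathbf{a}\in\mathbf{Z}_m^n$ the cycle length of $(T^k\mathbf{a})_{k\ge0}$ is the smallest positive integer $P$ such that there is $N$ with $T^{k+P}\mathbf{a}=T^k\mathbf{a}$ for all $k\ge N$. $P(m,n)$ denotes the maximum of these cycle lengths over all $\mathbf{a}\in\mathbf{Z}_m^n$. A prime $p$ is a Wieferich prime if $2^{p-1}\equiv1\pmod{p^2}$. *)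

From mathcomp Require Import all_boot.
Set Implicit Arguments. Unset Strict Implicit. Unset Printing Implicit Defensive.

(* Vectors of Z_m^n are modelled as finite functions 'I_n -> 'I_m (entries are
   residues 0..m-1); for m >= 1 this is exactly Z_m^n. *)
Definition vecZ (m n : nat) := {ffun 'I_n -> 'I_m}.

Definition nexti (n : nat) (i : 'I_n) : 'I_n := ordS i.

Definition Tmap (m n : nat) (a : vecZ m n) : vecZ m n :=
  match m as m0 return vecZ m0 n -> vecZ m0 n with
  | 0 => fun b => b
  | m'.+1 => fun b => [ffun i => Ordinal (ltn_pmod (b i + b (nexti i)) (ltn0Sn m'))]
  end a.

Definition is_eventual_period (m n : nat) (a : vecZ m n) (P : nat) : Prop :=
  exists N, forall k, N <= k -> iter (k + P) (@Tmap m n) a = iter k (@Tmap m n) a.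

Definition is_cycle_length (m n : nat) (a : vecZ m n) (P : nat) : Prop :=
  0 < P /\ is_eventual_period a P /\
  (forall Q, 0 < Q -> is_eventual_period a Q -> P <= Q).

Definition is_Pmax (m n Q : nat) : Prop :=
  (exists a : vecZ m n, is_cycle_length a Q) /\
  (forall (a : vecZ m n) (P : nat), is_cycle_length a P -> P <= Q).

Definition wieferich (p : nat) : Prop := prime p /\ 2 ^ p.-1 = 1 %[mod p ^ 2].

(* T acts on row vectors as right multiplication by 1 + S, where
   S is the cyclic shift, i.e. by the image of w = X + 1 in Z[X]/(m, X^n - 1).
   So the eventual periods common to all orbits are the P with
   w^N (w^P - 1) in the ideal (m, X^n - 1) for some N; they are the multiples of
   the least one, which is P(m, n) and is attained by the unit vector e_0.
   Write n = p^s n' with p not dividing n'.  By Frobenius w^(p^a) = X^(p^a) + 1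
   mod p, so p^s (p^f - 1) is a period mod p, f = totient n'; and a period P
   mod p^k lifts to the period p P mod p^(k+1).  Hence P(p, n) divides
   p^s (p^f - 1) and P(p^k, n) divides p^(k-1) P(p, n).  Conversely, modulo
   X^(p^s) - 1, a divisor of X^n - 1, one has w^(p^s (p-1)) = 1 + p c + ...
   with c = q + (p-1) 2^(p-2) sigma (mod p), where sigma has degree < p^s and
   no constant term and q = (2^(p-1) - 1)/p is the Fermat quotient.  As p is
   not Wieferich, p does not divide q, so c is not in (p, X^(p^s) - 1), and
   raising to p-th powers (p odd) shows that every period mod p^(j+2) is a
   multiple of p^(s+j+1).  Since P(p, n) also divides P(p^k, n), this forces
   P(p^k, n) = p^(k-1) P(p, n). *)

From Stdlib Require Import Classical Wf_nat.
From mathcomp Require Import all_boot all_algebra cyclic.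
From mathcomp Require Import ring zify.

Set Implicit Arguments. Unset Strict Implicit. Unset Printing Implicit Defensive.
Import GRing.Theory.
Local Open Scope ring_scope.

Lemma ex_least_nat (P : nat -> Prop) :
  (exists n, P n) -> exists2 n, P n & forall m, P m -> (n <= m)%N.
Proof.
move=> exP; have [n [[Pn n_min] _]] :=
  dec_inh_nat_subset_has_unique_least_element P (fun n => classic (P n)) exP.
by exists n => // m /n_min /leP.
Qed.

Lemma prime_dvd_bin_pexp p s i : prime p -> (0 < i < p ^ s)%N -> (p %| 'C(p ^ s, i))%N.
Proof.
move=> pr_p /andP[i_gt0 lt_i_ps]; apply: contraT => p_ndvd.
have cop : coprime (p ^ s) 'C(p ^ s, i) by rewrite coprimeXl // prime_coprime.
have := mul_bin_diag (p ^ s) i.-1; rewrite prednK // => e.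
have : (p ^ s %| i * 'C(p ^ s, i))%N by rewrite -e dvdn_mulr.
by rewrite Gauss_dvdl // => /(dvdn_leq i_gt0); rewrite leqNgt lt_i_ps.
Qed.

Lemma dvdn_pexp_drop p e u x : prime p -> coprime p u ->
  (x %| p ^ e.+1 * u)%N -> ~~ (p ^ e.+1 %| x)%N -> (x %| p ^ e * u)%N.
Proof.
move=> pr_p cop_pu /dvdnP[y def_y] ndvd_x.
have /dvdnP[z def_z] : (p %| y)%N.
  apply: contraR ndvd_x => ndvd_y.
  have cop_y : coprime (p ^ e.+1) y by rewrite coprimeXl // prime_coprime.
  by rewrite -(Gauss_dvdr _ cop_y) -def_y dvdn_mulr.
apply/dvdnP; exists z; apply/eqP; rewrite -(eqn_pmul2r (prime_gt0 pr_p)).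
by rewrite mulnAC -expnSr def_y def_z mulnAC.
Qed.

Lemma dvdn_pexp_mul p s k D Q L : prime p -> coprime p D -> (Q %| p ^ s * D)%N ->
  (Q %| L)%N -> (p ^ (s + k) %| L)%N -> (p ^ k * Q %| L)%N.
Proof.
move=> pr_p cop_pD /dvdnP[y def_y] /dvdnP[x ->] dvd_L; rewrite dvdn_mul //.
have : (p ^ (s + k) %| p ^ s * (x * D))%N.
  by rewrite mulnCA def_y mulnCA; apply: dvdn_mull.
by rewrite expnD dvdn_pmul2l ?expn_gt0 ?prime_gt0 // Gauss_dvdl // coprimeXl.
Qed.

Section Expansions.

Variable R : comPzRingType.
Implicit Types a b c y z : R.

Lemma exprDM_eqmod a b c m : exists h, (a + b * c) ^+ m = a ^+ m + b * h.
Proof.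
elim: m => [|m [h IH]]; first by exists 0; rewrite !expr0 mulr0 addr0.
by exists (h * (a + b * c) + a ^+ m * c); rewrite exprSr IH exprSr; ring.
Qed.

Lemma exprD_order2 a y m :
  exists h, (a + y) ^+ m.+1 = a ^+ m.+1 + m.+1%:R * a ^+ m * y + y ^+ 2 * h.
Proof.
elim: m => [|m [h IH]]; first by exists 0; rewrite !expr1 expr0; ring.
exists (m.+1%:R * a ^+ m + h * (a + y)).
by rewrite exprSr IH !exprS -natr1; ring.
Qed.

Lemma exprD1n_order3 y m :
  exists h, (1 + y) ^+ m = 1 + m%:R * y + 'C(m, 2)%:R * y ^+ 2 + y ^+ 3 * h.
Proof.
elim: m => [|m [h IH]]; first by exists 0; rewrite expr0 bin0n /=; ring.
exists ('C(m, 2)%:R + h * (1 + y)).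
by rewrite exprSr IH binS bin1 natrD -natr1; ring.
Qed.

(* Oddness of p makes 'C(p, 2) a multiple of p. *)
Lemma exprp_lift p j c z h0 : odd p ->
  exists e h, (1 + (p ^ j.+1)%:R * c + z * h0) ^+ p =
              1 + (p ^ j.+2)%:R * (c + p%:R * e) + z * h.
Proof.
move=> odd_p; set t := (p ^ j.+1)%:R * c.
have [h eh] := exprDM_eqmod (1 + t) z h0 p.
have [K eK] := exprD1n_order3 t p.
exists ((p.-1)./2%:R * (p ^ j)%:R * c ^+ 2 + (p ^ j * p ^ j)%:R * c ^+ 3 * K), h.
by rewrite eh eK bin2odd // /t !natrM !natrX !exprS; ring.
Qed.

Lemma exprpX_lift p c z h0 : odd p -> forall j, exists e h,
  (1 + p%:R * c + z * h0) ^+ (p ^ j) = 1 + (p ^ j.+1)%:R * (c + p%:R * e) + z * h.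
Proof.
move=> odd_p; elim=> [|j [e [h IH]]].
  by exists 0, h0; rewrite expn0 expr1 expn1 mulr0 addr0.
have [e' [h' eh']] := exprp_lift j (c + p%:R * e) z h odd_p.
exists (e + e'), h'; rewrite expnSr exprM IH eh'; ring.
Qed.

End Expansions.

Definition frob_quot (p s : nat) : {poly int} := \poly_(i < p ^ s) ('C(p ^ s, i) %/ p)%:R.

Lemma exprD1n_frob p s : prime p ->
  ('X + 1) ^+ (p ^ s) = 'X^(p ^ s) + 1 + p%:R * frob_quot p s.
Proof.
move=> pr_p; set N := (p ^ s)%N; have N_gt0 : (0 < N)%N by rewrite expn_gt0 prime_gt0.
have -> : ('X + 1) ^+ N = \poly_(i < N.+1) 'C(N, i)%:R :> {poly int}.
  by rewrite exprD1n poly_def; apply: eq_bigr => i _; rewrite scaler_nat.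
apply/polyP => i; rewrite mulr_natl !coefD coefMn coefXn coef1 !coef_poly.
have [->|i_gt0] := posnP i.
  rewrite eq_sym (gtn_eqF N_gt0) bin0 divn_small ?prime_gt1 // if_same /=.
  by rewrite mul0rn add0r addr0.
rewrite /= addr0 -/N; case: (ltngtP i N) => [lt_iN|lt_Ni|->]; last first.
- by rewrite ltnSn binn /= mul0rn addr0.
- by rewrite ltnNge lt_Ni /= mul0rn addr0.
by rewrite ltnS ltnW //= add0r -mulrnA divnK ?prime_dvd_bin_pexp ?i_gt0.
Qed.

Lemma frob_quot_coef0 p s : prime p -> (frob_quot p s)`_0 = 0.
Proof.
by move=> pr_p; rewrite coef_poly expn_gt0 prime_gt0 // bin0 divn_small ?prime_gt1.
Qed.

(** * The ideal (d, X^n - 1) of Z[X] *)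

Implicit Types f g u : {poly int}.

Definition vanishes (d n : nat) f : Prop :=
  exists g h, f = d%:R * g + ('X^n - 1) * h.

Section Vanishes.

Variables d n : nat.

Lemma vanishes_natM g : vanishes d n (d%:R * g).
Proof. by exists g, 0; rewrite mulr0 addr0. Qed.

Lemma vanishes0 : vanishes d n 0.
Proof. by rewrite -(mulr0 d%:R); apply: vanishes_natM. Qed.

Lemma vanishes_XsubM e g : (n %| e)%N -> vanishes d n (('X^e - 1) * g).
Proof.
case/dvdnP=> k ->; exists 0, ((\sum_(i < k) 'X^n ^+ i) * g).
by rewrite mulnC exprM subrX1; ring.
Qed.

Lemma vanishesD f g : vanishes d n f -> vanishes d n g -> vanishes d n (f + g).
Proof. by move=> [a [b ->]] [c [e ->]]; exists (a + c), (b + e); ring. Qed.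

Lemma vanishesN f : vanishes d n f -> vanishes d n (- f).
Proof. by move=> [a [b ->]]; exists (- a), (- b); ring. Qed.

Lemma vanishesB f g : vanishes d n f -> vanishes d n g -> vanishes d n (f - g).
Proof. by move=> vf /vanishesN; apply: vanishesD. Qed.

Lemma vanishesMl f g : vanishes d n f -> vanishes d n (g * f).
Proof. by move=> [a [b ->]]; exists (g * a), (g * b); ring. Qed.

Lemma vanishesMr f g : vanishes d n f -> vanishes d n (f * g).
Proof. by rewrite mulrC; apply: vanishesMl. Qed.

Lemma vanishes_unit u f M N : (0 < M)%N ->
  vanishes d n (u ^+ M - 1) -> vanishes d n (u ^+ N * f) -> vanishes d n f.
Proof.
move=> M_gt0 vuM vuNf.
have -> : f = u ^+ (M * N - N) * (u ^+ N * f) - ((u ^+ M) ^+ N - 1) * f.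
  by rewrite mulrA -exprD subnK ?leq_pmull // -exprM; ring.
by apply: vanishesB; [apply: vanishesMl | rewrite subrX1 -mulrA; apply: vanishesMr].
Qed.

End Vanishes.

Lemma vanishesM d1 d2 n f g :
  vanishes d1 n f -> vanishes d2 n g -> vanishes (d1 * d2) n (f * g).
Proof.
move=> [a [b ->]] [c [e ->]].
by exists (a * c), (a * e * d1%:R + b * (d2%:R * c + ('X^n - 1) * e)); rewrite natrM; ring.
Qed.

Lemma vanishes_dvd d d' n f : (d' %| d)%N -> vanishes d n f -> vanishes d' n f.
Proof.
by case/dvdnP=> k -> [g [h ->]]; exists (k%:R * g), h; rewrite natrM; ring.
Qed.

Lemma vanishes_dvd_len d n r f : (r %| n)%N -> vanishes d n f -> vanishes d r f.
Proof.
move=> dvd_rn [g [h ->]].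
by apply: vanishesD; [apply: vanishes_natM | apply: vanishes_XsubM].
Qed.

Definition shiftmx n : 'M[int]_n.+1 := \matrix_(i, j) (i == ordS j)%:R.

Lemma mulmx_shiftmx m n (A : 'M[int]_(m, n.+1)) i j :
  (A *m shiftmx n) i j = A i (ordS j).
Proof.
rewrite mxE (bigD1 (ordS j)) //= big1 ?addr0 => [|k ne_kj]; rewrite mxE.
  by rewrite eqxx mulr1.
by rewrite (negbTE ne_kj) mulr0.
Qed.

Lemma shiftmx_mulmx m n (A : 'M[int]_(n.+1, m)) i j :
  (shiftmx n *m A) (ordS i) j = A i j.
Proof.
rewrite mxE (bigD1 i) //= big1 ?addr0 => [|k ne_ki]; rewrite mxE.
  by rewrite eqxx mul1r.
by rewrite (inj_eq (@ordS_inj _)) eq_sym (negbTE ne_ki) mul0r.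
Qed.

Lemma shiftmx_exp n k i j : (shiftmx n ^+ k) i j = (i == ((j + k) %% n.+1)%N :> nat)%:R.
Proof.
elim: k i j => [|k IHk] i j.
  by rewrite expr0 mxE addn0 modn_small.
rewrite exprSr mulmx_shiftmx IHk /=; congr (_ == _)%:R.
by rewrite modnDml addSnnS.
Qed.

Lemma horner_shiftmx_Xsub1 n : horner_mx (shiftmx n) ('X^(n.+1) - 1) = 0.
Proof.
rewrite rmorphB rmorph1 rmorphXn /= horner_mx_X; apply/eqP; rewrite subr_eq0.
by apply/eqP/matrixP => i j; rewrite shiftmx_exp !mxE modnDr modn_small.
Qed.

Lemma horner_shiftmx_col0 n f (i : 'I_n.+1) :
  (size f <= n.+1)%N -> horner_mx (shiftmx n) f i 0 = f`_i.
Proof.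
move=> le_f_n; have fE : f = \poly_(k < n.+1) f`_k.
  apply/polyP => k; rewrite coef_poly; case: ltnP => // le_n_k.
  by rewrite nth_default // (leq_trans le_f_n).
rewrite [in LHS]fE poly_def raddf_sum summxE (bigD1 i) //= big1 ?addr0 => [|k ne_ki];
  rewrite linearZ /= rmorphXn /= horner_mx_X mxE shiftmx_exp add0n modn_small //.
  by rewrite eqxx mulr1.
by rewrite eq_sym val_eqE (negbTE ne_ki) mulr0.
Qed.

Lemma horner_shiftmx_ordS n f i j :
  horner_mx (shiftmx n) f (ordS i) (ordS j) = horner_mx (shiftmx n) f i j.
Proof.
have commA := comm_horner_mx f (erefl (shiftmx n *m shiftmx n)).
by rewrite -mulmx_shiftmx [_ *m _]commA shiftmx_mulmx.
Qed.

Lemma horner_shiftmx_row0 (S : {pred int}) n f :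
  (forall j, horner_mx (shiftmx n) f 0 j \in S) ->
  horner_mx (shiftmx n) f \is a mxOver S.
Proof.
move=> row0; apply/mxOverP => -[t lt_t_n]; elim: t lt_t_n => [|t IHt] lt_t_n j.
  by rewrite (_ : Ordinal _ = 0) //; apply: val_inj.
have -> : Ordinal lt_t_n = ordS (Ordinal (ltnW lt_t_n)).
  by apply: val_inj; rewrite /= modn_small.
by rewrite -(ord_predK j) horner_shiftmx_ordS IHt.
Qed.

(* Division by the monic X^(n+1) - 1 leaves a remainder of degree <= n, whose
   coefficients are the first column of its matrix. *)
Lemma vanishesP d n f :
  vanishes d n.+1 f <-> horner_mx (shiftmx n) f \is a mxOver (dvdz d).
Proof.
split=> [[g [h ->]] | /mxOverP dvd_f].
  rewrite rmorphD !rmorphM /= horner_shiftmx_Xsub1 mul0r addr0 rmorph_nat mulr_natl.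
  by apply/mxOverP => i j; rewrite mulmxnE -mulr_natr natz dvdz_mull.
set Y : {poly int} := 'X^(n.+1) - 1.
have monY : Y \is monic by rewrite /Y -polyC1 monicXnsubC.
have fE := Pdiv.RingMonic.rdivp_eq monY f; set r := Pdiv.CommonRing.rmodp f Y in fE.
have size_r : (size r <= n.+1)%N.
  by rewrite -ltnS -(size_XnsubC (1 : int) (ltn0Sn n)) polyC1 Pdiv.Ring.ltn_rmodp monic_neq0.
have horner_r : horner_mx (shiftmx n) r = horner_mx (shiftmx n) f.
  by rewrite [in RHS]fE rmorphD rmorphM /= horner_shiftmx_Xsub1 mulr0 add0r.
have /polyOver_dvdzP[g rE] : r \is a polyOver (dvdz d).
  apply/polyOverP => i; have [lt_i_n | le_n_i] := ltnP i n.+1.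
    by rewrite -(horner_shiftmx_col0 (Ordinal lt_i_n)) // horner_r.
  by rewrite nth_default ?dvdz0 // (leq_trans size_r).
exists g, (Pdiv.CommonRing.rdivp f Y); rewrite {1}fE rE /Y -natz scaler_nat -mulr_natl; ring.
Qed.

Lemma vanishes_cancel k d n f : (0 < k)%N -> (0 < n)%N ->
  vanishes (k * d) n (k%:R * f) -> vanishes d n f.
Proof.
move=> k_gt0; case: n => // n _; rewrite !vanishesP => /mxOverP dvd_kf.
apply/mxOverP => i j; have := dvd_kf i j.
rewrite rmorphM rmorph_nat /= mulr_natl mulmxnE -mulr_natl natz PoszM.
by rewrite dvdz_mul2l // eqz_nat -lt0n.
Qed.

Lemma vanishes_coef d n f i :
  (size f <= n)%N -> vanishes d n f -> (d %| f`_i)%Z.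
Proof.
case: n => [|n] le_f_n; first by move: le_f_n; rewrite leqn0 => /nilP ->; rewrite nth_nil.
move=> /vanishesP /mxOverP dvd_f; have [lt_i_n | le_n_i] := ltnP i n.+1.
  by rewrite -(horner_shiftmx_col0 (Ordinal lt_i_n)).
by rewrite nth_default // (leq_trans le_f_n).
Qed.

(** * Eventual periods of X + 1 *)

Local Notation w := ('X + 1 : {poly int}).

Definition period_mod (d n P : nat) : Prop :=
  exists N, vanishes d n (w ^+ N * (w ^+ P - 1)).

Definition least_period (d n L : nat) : Prop :=
  [/\ (0 < L)%N, period_mod d n L &
      forall P, (0 < P)%N -> period_mod d n P -> (L <= P)%N].

Section Periods.

Variables d n : nat.
Local Notation period := (period_mod d n).

Lemma period_mod0 : period 0.
Proof. by exists 0%N; rewrite expr0 subrr mulr0; apply: vanishes0. Qed.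

Lemma period_modD a b : period a -> period b -> period (a + b).
Proof.
move=> [N1 va] [N2 vb]; exists (N1 + N2)%N.
have -> : w ^+ (N1 + N2) * (w ^+ (a + b) - 1) =
    w ^+ N1 * (w ^+ a - 1) * w ^+ (N2 + b) + w ^+ N2 * (w ^+ b - 1) * w ^+ N1.
  by rewrite !exprD; ring.
by apply: vanishesD; apply: vanishesMr.
Qed.

Lemma period_modB a b : (a <= b)%N -> period a -> period b -> period (b - a).
Proof.
move=> le_ab [N1 va] [N2 vb]; exists (N1 + N2 + a)%N.
have -> : w ^+ (N1 + N2 + a) * (w ^+ (b - a) - 1) =
    w ^+ N1 * (w ^+ N2 * (w ^+ b - 1)) - w ^+ N2 * (w ^+ N1 * (w ^+ a - 1)).
  by rewrite -{2}(subnKC le_ab) !exprD; ring.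
by apply: vanishesB; apply: vanishesMl.
Qed.

Lemma period_modMn a k : period a -> period (a * k).
Proof.
move=> pa; elim: k => [|k IHk]; first by rewrite muln0; apply: period_mod0.
by rewrite mulnS; apply: period_modD.
Qed.

Lemma period_mod_dvdn a b : (a %| b)%N -> period a -> period b.
Proof. by case/dvdnP=> k -> /period_modMn; rewrite mulnC. Qed.

Lemma period_mod_gcd a b : period a -> period b -> period (gcdn a b).
Proof.
have [-> _ pb|a_gt0 pa pb] := posnP a; first by rewrite gcd0n.
case: (egcdnP b a_gt0) => ka kb; rewrite mulnC [(kb * b)%N]mulnC => Bezout _.
rewrite (_ : gcdn a b = a * ka - b * kb)%N; last by rewrite Bezout addKn.
by apply: period_modB; [rewrite Bezout leq_addr | apply: period_modMn..].
Qed.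

Lemma least_period_dvdn L P : least_period d n L -> period P -> (L %| P)%N.
Proof.
move=> [L_gt0 pL L_min] pP; have [-> //|P_gt0] := posnP P.
have g_gt0 : (0 < gcdn L P)%N by rewrite gcdn_gt0 L_gt0.
have le_Lg := L_min _ g_gt0 (period_mod_gcd pL pP).
have /eqP <- : gcdn L P == L by rewrite eqn_leq le_Lg dvdn_leq ?dvdn_gcdl.
exact: dvdn_gcdr.
Qed.

End Periods.

Lemma period_mod_dvd d d' n P : (d' %| d)%N -> period_mod d n P -> period_mod d' n P.
Proof. by move=> dvd_d [N vN]; exists N; apply: vanishes_dvd vN. Qed.

Lemma period_mod_dvd_len d n r P : (r %| n)%N -> period_mod d n P -> period_mod d r P.
Proof. by move=> dvd_rn [N vN]; exists N; apply: vanishes_dvd_len vN. Qed.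

Lemma period_mod_lift q d n P :
  (q %| d)%N -> period_mod d n P -> period_mod (q * d) n (P * q).
Proof.
move=> dvd_qd [N vA]; exists (N + N)%N; set A := w ^+ N * (w ^+ P - 1) in vA.
have [H eH] := exprD1n_order3 (w ^+ P - 1) q; rewrite addrC subrK in eH.
have -> : w ^+ (N + N) * (w ^+ (P * q) - 1) =
    (q%:R * w ^+ N) * A + A ^+ 2 * ('C(q, 2)%:R + (w ^+ P - 1) * H).
  by rewrite exprM eH exprD /A; ring.
apply: vanishesD; first exact: vanishesM (vanishes_natM _ _ _) vA.
apply: vanishesMr; apply: vanishes_dvd (vanishesM vA vA).
by rewrite dvdn_mul.
Qed.

Lemma period_mod_pexp p n Q k : period_mod p n Q -> period_mod (p ^ k.+1) n (p ^ k * Q).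
Proof.
move=> pQ; elim: k => [|k IHk]; first by rewrite mul1n expn1.
have := period_mod_lift (dvdn_exp (ltn0Sn k) (dvdnn p)) IHk.
by rewrite -expnS mulnAC -expnSr.
Qed.

Lemma period_mod_frob p n a b : prime p -> (a <= b)%N ->
  (n %| p ^ b - p ^ a)%N -> period_mod p n (p ^ b - p ^ a).
Proof.
move=> pr_p le_ab dvd_n; exists (p ^ a)%N.
have le_pab : (p ^ a <= p ^ b)%N by rewrite leq_pexp2l ?prime_gt0.
rewrite mulrBr mulr1 -exprD subnKC // !exprD1n_frob // -{1}(subnK le_pab) exprD.
have -> : 'X^(p ^ b - p ^ a) * 'X^(p ^ a) + 1 + p%:R * frob_quot p b -
    ('X^(p ^ a) + 1 + p%:R * frob_quot p a) =
    ('X^(p ^ b - p ^ a) - 1) * 'X^(p ^ a) + p%:R * (frob_quot p b - frob_quot p a).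
  by ring.
by apply: vanishesD; [apply: vanishes_XsubM | apply: vanishes_natM].
Qed.

(** * Orbits of T *)

Section DvdzMatrices.

Variable d : int.

Lemma mxOver_dvdz_mull k m n (B : 'M[int]_(k, m)) (A : 'M[int]_(m, n)) :
  A \is a mxOver (dvdz d) -> B *m A \is a mxOver (dvdz d).
Proof.
move=> /mxOverP dvdA; apply/mxOverP => i j; rewrite mxE.
by apply: rpred_sum => l _; apply: dvdz_mull.
Qed.

Lemma mxOver_dvdz_mulr k m n (A : 'M[int]_(k, m)) (B : 'M[int]_(m, n)) :
  A \is a mxOver (dvdz d) -> A *m B \is a mxOver (dvdz d).
Proof.
move=> /mxOverP dvdA; apply/mxOverP => i j; rewrite mxE.
by apply: rpred_sum => l _; apply: dvdz_mulr.
Qed.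

End DvdzMatrices.

Lemma TmapE m n (a : vecZ m n) i :
  (0 < m)%N -> (Tmap a i : nat) = ((a i + a (nexti i)) %% m)%N.
Proof. by case: m a => [//|m] a _ /=; rewrite ffunE. Qed.

Definition vec_row m n (a : vecZ m n.+1) : 'rV[int]_n.+1 := \row_i (a i : nat)%:Z.

Section Orbits.

Variables (m n : nat) (a : vecZ m n.+1).
Hypothesis m_gt0 : (0 < m)%N.
Local Notation T := (@Tmap m n.+1).
Local Notation hmx := (horner_mx (shiftmx n)).

Lemma iter_Tmap_mod k i :
  ((iter k T a i : nat)%:Z = (vec_row a *m hmx (w ^+ k)) ord0 i %[mod m])%Z.
Proof.
elim: k i => [|k IHk] i; first by rewrite expr0 rmorph1 mulmx1 mxE.
rewrite iterS TmapE // -modz_nat PoszD modz_mod exprSr rmorphM /= rmorphD rmorph1 /=.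
rewrite horner_mx_X mulmxA mulmxDr mulmx1 mxE mulmx_shiftmx.
by rewrite -modzDm IHk IHk modzDm addrC.
Qed.

Lemma iter_Tmap_eqP k l :
  iter k T a = iter l T a <-> vec_row a *m hmx (w ^+ k - w ^+ l) \is a mxOver (dvdz m).
Proof.
rewrite rmorphB /= mulmxBr; split => [eq_kl | /mxOverP dvd_kl].
  apply/mxOverP => i j; rewrite (ord1 i) mxE [X in _ + X]mxE -eqz_mod_dvd.
  by rewrite -!iter_Tmap_mod eq_kl.
apply/ffunP => j; apply: val_inj; have := dvd_kl 0 j.
rewrite mxE [X in _ + X]mxE -eqz_mod_dvd -!iter_Tmap_mod !modz_nat => /eqP[].
by rewrite !modn_small.
Qed.

Lemma eventual_periodP P : is_eventual_period a P <->
  exists N, vec_row a *m hmx (w ^+ N * (w ^+ P - 1)) \is a mxOver (dvdz m).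
Proof.
have wE k : w ^+ k * (w ^+ P - 1) = w ^+ (k + P) - w ^+ k by rewrite mulrBr mulr1 -exprD.
split=> [[N per_a] | [N dvd_N]]; exists N; first by rewrite wE -iter_Tmap_eqP ?per_a.
move=> k le_Nk; apply/iter_Tmap_eqP; rewrite -wE -(subnKC le_Nk) exprD.
rewrite mulrAC rmorphM -mulmxE mulmxA; exact: mxOver_dvdz_mulr.
Qed.

Lemma period_mod_eventual P : period_mod m n.+1 P -> is_eventual_period a P.
Proof.
by move=> [N /vanishesP vN]; apply/eventual_periodP; exists N; apply: mxOver_dvdz_mull.
Qed.

End Orbits.

Definition delta m n (lt1m : (1 < m)%N) : vecZ m n.+1 :=
  [ffun i => Ordinal (leq_ltn_trans (leq_b1 (i == ord0)) lt1m)].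

Lemma vec_row_deltaE m n (lt1m : (1 < m)%N) (A : 'M[int]_n.+1) j :
  (vec_row (delta n lt1m) *m A) 0 j = A 0 j.
Proof.
rewrite mxE (bigD1 0) //= big1 ?addr0 => [|k nz_k]; rewrite !mxE ffunE.
  by rewrite eqxx mul1r.
by rewrite (negbTE nz_k) mul0r.
Qed.

Lemma eventual_period_delta m n (lt1m : (1 < m)%N) P :
  is_eventual_period (delta n lt1m) P <-> period_mod m n.+1 P.
Proof.
split=> [/(eventual_periodP _ (ltnW lt1m))[N /mxOverP dvdN] | ].
  exists N; apply/vanishesP/horner_shiftmx_row0 => j.
  by have := dvdN 0 j; rewrite vec_row_deltaE.
by move=> pP; apply: (period_mod_eventual _ (ltnW lt1m) pP).
Qed.

Lemma iter_eventually_periodic (T : finType) (f : T -> T) x :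
  exists N P, (0 < P)%N /\ forall k, (N <= k)%N -> iter (k + P) f x = iter k f x.
Proof.
have /trajectP[i lt_i_o iter_o] := looping_order f x.
exists i, (order f x - i)%N; split=> [|k le_ik]; first by rewrite subn_gt0.
by rewrite -(subnK le_ik) -addnA subnKC 1?ltnW // !iterD iter_o.
Qed.

Lemma cycle_length_exists m n (a : vecZ m n) : exists L, is_cycle_length a L.
Proof.
have [N [P [P_gt0 per]]] := iter_eventually_periodic (@Tmap m n) a.
have [L [L_gt0 perL] L_min] :=
  @ex_least_nat (fun L => 0 < L /\ is_eventual_period a L)%N
    (ex_intro _ P (conj P_gt0 (ex_intro _ N per))).
by exists L; split=> //; split=> // Q Q_gt0 perQ; apply: L_min.
Qed.

Lemma cycle_length_delta m n (lt1m : (1 < m)%N) L :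
  is_cycle_length (delta n lt1m) L <-> least_period m n.+1 L.
Proof.
have dlE P := eventual_period_delta n lt1m P.
split=> [[L_gt0 [/dlE pL L_min]] | [L_gt0 pL L_min]].
  by split=> // P P_gt0 /dlE; apply: L_min.
by split=> //; split=> [|P P_gt0 /dlE]; [apply/dlE | apply: L_min].
Qed.

Lemma Pmax_least_period m n Q : (1 < m)%N ->
  is_Pmax m n.+1 Q <-> least_period m n.+1 Q.
Proof.
move=> lt1m; have m_gt0 := ltnW lt1m; set dl := delta n lt1m.
split=> [[[a [Q_gt0 [_ Q_min]]] Q_max] | lpQ].
  have [C cC] := cycle_length_exists dl.
  have [C_gt0 pC _] := (cycle_length_delta n lt1m C).1 cC.
  suff <- : C = Q by apply/cycle_length_delta.
  have le_QC := Q_min C C_gt0 (period_mod_eventual a m_gt0 pC).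
  by apply/eqP; rewrite eqn_leq (Q_max dl).
have [Q_gt0 pQ _] := lpQ.
split=> [|a P [P_gt0 [_ P_min]]]; first by exists dl; apply/cycle_length_delta.
exact: P_min (period_mod_eventual a m_gt0 pQ).
Qed.

(** * Lifting the period to powers of p *)

Lemma nonwieferich_first_order p s : prime p -> odd p -> ~ wieferich p ->
  exists c h, w ^+ (p ^ s * p.-1) = 1 + p%:R * c + ('X^(p ^ s) - 1) * h /\
              ~ vanishes p (p ^ s) c.
Proof.
move=> pr_p odd_p nwief.
have [q fermat] : exists q, (2 ^ p.-1 = 1 + p * q)%N.
  have : (p %| 2 ^ p.-1 - 1)%N.
    rewrite -eqn_mod_dvd ?expn_gt0 // -(totient_prime pr_p) Euler_exp_totient //.
    by rewrite prime_coprime // dvdn2 odd_p.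
  by case/dvdnP=> q def_q; exists q; rewrite mulnC -def_q subnKC ?expn_gt0.
have ndvd_q : ~~ (p %| q)%N.
  apply/negP => /dvdnP[z def_q]; apply: nwief; split=> //.
  by rewrite fermat def_q mulnCA mulnn addnC modnMDl.
set sigma := frob_quot p s; set Y : {poly int} := 'X^(p ^ s) - 1.
have [h eh] := exprDM_eqmod (2%:R + p%:R * sigma) Y 1 p.-1.
have [K eK] := exprD_order2 2%:R (p%:R * sigma) p.-2.
rewrite (_ : p.-2.+1 = p.-1) in eK; last by have := prime_gt1 pr_p; lia.
set k := (p.-1 * 2 ^ p.-2)%N.
exists (q%:R + k%:R * sigma + p%:R * (sigma ^+ 2 * K)), h; split.
  rewrite exprM exprD1n_frob // (_ : _ + 1 + _ = 2%:R + p%:R * sigma + Y * 1); last first.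
    by rewrite /Y /sigma; ring.
  by rewrite eh eK -natrX fermat /k natrD !natrM !natrX; ring.
have size_c0 : (size ((q%:R)%:P + k%:R *: sigma)%R <= p ^ s)%N.
  rewrite (leq_trans (size_polyD _ _)) // geq_max (leq_trans (size_polyC_leq1 _)).
    by rewrite (leq_trans (size_scale_leq _ _)) ?size_poly.
  by rewrite expn_gt0 prime_gt0.
move=> /vanishesB/(_ (vanishes_natM p (p ^ s) (sigma ^+ 2 * K))).
rewrite addrK -!polyC_natr mul_polyC => /(vanishes_coef 0 size_c0).
rewrite coefD coefC coefZ frob_quot_coef0 // mulr0 addr0 /= dvdzE natz /=.
exact/negP.
Qed.

Lemma period_mod_ppow_dvdn p s j L : prime p -> odd p -> ~ wieferich p ->
  period_mod (p ^ j.+2) (p ^ s) L -> (p ^ (s + j.+1) %| L)%N.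
Proof.
move=> pr_p odd_p nwief pL; have p_gt0 := prime_gt0 pr_p.
have [c [h [wM not_vc]]] := nonwieferich_first_order s pr_p odd_p nwief.
set M := (p ^ s * p.-1)%N in wM; set Y : {poly int} := 'X^(p ^ s) - 1 in wM.
have M_gt0 : (0 < M)%N by rewrite muln_gt0 expn_gt0 p_gt0 -subn1 subn_gt0 prime_gt1.
have ME i : (M * p ^ i = p ^ (s + i) * p.-1)%N by rewrite mulnAC -expnD.
have wMX i : exists e h', w ^+ (M * p ^ i) = 1 + (p ^ i.+1)%:R * (c + p%:R * e) + Y * h'.
  by rewrite exprM wM; apply: exprpX_lift.
have pM : period_mod (p ^ j.+2) (p ^ s) (M * p ^ j.+1).
  have [e [h' eM]] := wMX j.+1.
  by exists 0%N, (c + p%:R * e), h'; rewrite mul1r eM /Y; ring.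
have not_pM : ~ period_mod (p ^ j.+2) (p ^ s) (M * p ^ j).
  move=> [N vN]; have [e [h' eMj]] := wMX j; apply: not_vc.
  have : vanishes (p ^ j.+1 * p) (p ^ s) ((p ^ j.+1)%:R * (w ^+ N * (c + p%:R * e))).
    rewrite -expnSr (_ : _ * _ = w ^+ N * (w ^+ (M * p ^ j) - 1) - Y * (w ^+ N * h')).
      by apply: vanishesB vN _; apply: vanishes_XsubM.
    by rewrite eMj /Y; ring.
  have pX_gt0 i : (0 < p ^ i)%N by rewrite expn_gt0 p_gt0.
  move/(vanishes_cancel (pX_gt0 _) (pX_gt0 _)) => vN'.
  have vM1 : vanishes p (p ^ s) (w ^+ M - 1) by exists c, h; rewrite wM /Y; ring.
  have := vanishesB (vanishes_unit M_gt0 vM1 vN') (vanishes_natM p (p ^ s) e).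
  by rewrite addrK.
apply: contraT => ndvd_L; exfalso; apply: not_pM.
apply: period_mod_dvdn (period_mod_gcd pL pM).
rewrite (ME j); apply: (dvdn_pexp_drop pr_p (coprimenP p_gt0)).
  by rewrite -addnS -ME dvdn_gcdr.
by apply: contra ndvd_L; rewrite addnS => /dvdn_trans; apply; apply: dvdn_gcdl.
Qed.

Lemma least_period_ppow p n k Q : prime p -> odd p -> ~ wieferich p -> (0 < n)%N ->
  least_period p n Q -> least_period (p ^ k.+1) n (p ^ k * Q).
Proof.
move=> pr_p odd_p nwief n_gt0 lpQ; have [Q_gt0 pQ _] := lpQ.
case: k => [|j]; first by rewrite expn0 mul1n expn1.
have p_gt0 := prime_gt0 pr_p; have [n' cop_pn' n_def] := pfactor_coprime pr_p n_gt0.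
set s := logn p n in n_def; set f := totient n'.
have f_gt0 : (0 < f)%N.
  by rewrite totient_gt0 lt0n; apply: contraTneq n_gt0 => n'0; rewrite n_def n'0.
have dvd_Q : (Q %| p ^ s * (p ^ f).-1)%N.
  apply: least_period_dvdn lpQ _; rewrite -subn1 mulnBr muln1 -expnD.
  apply: period_mod_frob; rewrite ?leq_addr //.
  rewrite expnD -{2}(muln1 (p ^ s)%N) -mulnBr n_def mulnC.
  rewrite dvdn_pmul2l ?expn_gt0 ?p_gt0 // -eqn_mod_dvd ?expn_gt0 ?p_gt0 //.
  exact/eqP/Euler_exp_totient.
have cop_pD : coprime p (p ^ f).-1.
  by apply: coprime_dvdl (coprimenP _); rewrite ?dvdn_exp // expn_gt0 p_gt0.
split=> [|//|L L_gt0 pL]; first by rewrite muln_gt0 expn_gt0 p_gt0.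
  exact: period_mod_pexp.
apply: dvdn_leq L_gt0 (dvdn_pexp_mul pr_p cop_pD dvd_Q _ _).
  by apply: least_period_dvdn lpQ (period_mod_dvd _ pL); rewrite dvdn_exp.
apply: period_mod_ppow_dvdn pr_p odd_p nwief _.
by apply: period_mod_dvd_len pL; rewrite n_def dvdn_mull.
Qed.

Local Close Scope ring_scope.

Theorem theorem5p10 (p : nat) :
  prime p -> 3 <= p -> ~ wieferich p ->
  forall k n : nat, 0 < k -> 0 < n ->
  forall Q : nat, is_Pmax p n Q -> is_Pmax (p ^ k) n (p ^ k.-1 * Q).
Proof.
move=> pr_p le3p nwief k n k_gt0 n_gt0 Q.
have odd_p : odd p by case: (even_prime pr_p) => // p2; rewrite p2 in le3p.
have p_gt1 := prime_gt1 pr_p; have pk_gt1 : 1 < p ^ k by rewrite -(expn0 p) ltn_exp2l.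
case: n n_gt0 => // n _ /(Pmax_least_period _ _ p_gt1) lpQ.
apply/(Pmax_least_period _ _ pk_gt1); rewrite -(prednK k_gt0) in lpQ *.
exact: least_period_ppow.
Qed.
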